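(* Let $k\ge4$ be even and let $(i,j\mid s,t)\in\mathcal{O}(\mathbb{C},k)$ with $i,j,s,t\in\{1,2,\dots,k/2\}$. Then $i<j\iff s<t$, and $i<s\iff j<t$.
   Context: $\phi=\exp(2\pi\mathrm{i}/k)$, $\mathbf{k}=\{1,\dots,k-1\}$, $\mathbf{k}_0=\{0,\dots,k-1\}$. A quadruple $(i,j\mid s,t)\in\mathbf{k}^4$ with $i\ne s$ is an overlap if $\phi^\omega(\phi^j-1)(\phi^s-1)=(\phi^i-1)(\phi^t-1)$ for some $\omega\in\mathbf{k}_0$; it is trivial if one of $i\equiv\pm j$, $j\equiv\pm t$, $t\equiv\pm s$, $s\equiv\pm i\pmod k$ holds, nontrivial otherwise. $\mathcal{O}(\mathbb{C},k)$ is the set of nontrivial overlaps. *)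

From HB Require Import structures.
From mathcomp Require Import all_boot all_order all_algebra.
From mathcomp Require Import all_classical all_reals.
From mathcomp Require Import trigo.
From mathcomp Require Import complex.
Set Implicit Arguments. Unset Strict Implicit. Unset Printing Implicit Defensive.
Import Order.TTheory GRing.Theory Num.Theory.
Local Open Scope ring_scope.
Local Open Scope complex_scope.

Definition phi (R : realType) (k : nat) : R[i] :=
  (cos (2 * pi / k%:R)) +i* (sin (2 * pi / k%:R)).

Definition is_overlap (R : realType) (k i j s t : nat) : Prop :=
  [/\ (0 < i < k)%N, (0 < j < k)%N, (0 < s < k)%N, (0 < t < k)%N & i <> s] /\
  exists w : nat, (w < k)%N /\
    (phi R k) ^+ w * ((phi R k) ^+ j - 1) * ((phi R k) ^+ s - 1)
    = ((phi R k) ^+ i - 1) * ((phi R k) ^+ t - 1).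

Definition cong_pm (k a b : nat) : Prop :=
  a = b %[mod k] \/ (a + b = 0 %[mod k]).

Definition trivial_quad (k i j s t : nat) : Prop :=
  cong_pm k i j \/ cong_pm k j t \/ cong_pm k t s \/ cong_pm k s i.

Definition nontrivial_overlap (R : realType) (k i j s t : nat) : Prop :=
  is_overlap R k i j s t /\ ~ trivial_quad k i j s t.

From mathcomp Require Import all_boot all_order all_algebra.
From mathcomp Require Import all_classical all_reals.
From mathcomp Require Import trigo complex.
From mathcomp Require Import ring lra.
Import Order.TTheory GRing.Theory Num.Theory.
Local Open Scope ring_scope.
Local Open Scope complex_scope.

(* Take squared moduli in the overlap equation
     phi^w (phi^j - 1)(phi^s - 1) = (phi^i - 1)(phi^t - 1).
   Since |phi| = 1 and |phi^a - 1|^2 = 2 - 2 cos (2 pi a / k) =: chord k a,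
   this gives  chord j * chord s = chord i * chord t.  For 0 <= a <= k/2 the
   angle 2 pi a / k lies in [0, pi], where cos is strictly decreasing, so
   chord is strictly increasing on {0, ..., k/2} and positive on
   {1, ..., k/2}.  For positive reals, x * w = y * z forces x < y <-> z < w;
   applied to the two ways of grouping the identity this yields both
   equivalences.  (Only the modulus identity is used: the conclusion holds
   for every overlap, trivial or not.)
   The file first proves multiplicativity of the squared modulus, then the
   de Moivre computation of |e^(i a theta) - 1|^2, the monotonicity of chord,
   and finally the elementary cross-multiplication lemma. *)

Section SquaredModulus.
Variable R : realFieldType.

(* The squared modulus |z|^2 = a^2 + b^2 of z = a + i b, avoiding square roots. *)
Definition sqnorm (z : R[i]) : R := let: a +i* b := z in a ^+ 2 + b ^+ 2.

Lemma sqnormM (x y : R[i]) : sqnorm (x * y) = sqnorm x * sqnorm y.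
Proof. by case: x => a b; case: y => c d /=; ring. Qed.

End SquaredModulus.
Arguments sqnorm {R} z.

Section UnitCircle.
Variable R : realType.

Definition cis (theta : R) : R[i] := cos theta +i* sin theta.

Lemma cis_expn (theta : R) (n : nat) : cis theta ^+ n = cis (n%:R * theta).
Proof.
elim: n => [|n IHn]; first by rewrite expr0 mul0r /cis cos0 sin0.
rewrite exprS IHn /cis -natr1 mulrDl mul1r cosD sinD /=.
by congr (_ +i* _); ring.
Qed.

Lemma sqnorm_cis (theta : R) : sqnorm (cis theta) = 1.
Proof. exact: cos2Dsin2. Qed.

Lemma sqnorm_cis_sub1 (theta : R) : sqnorm (cis theta - 1) = 2 - 2 * cos theta.
Proof. have := cos2Dsin2 theta; rewrite /= oppr0 addr0; nra. Qed.

(* chord k a = |phi^a - 1|^2, the squared length of the chord from 1 to phi^a. *)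
Definition chord (k a : nat) : R := 2 - 2 * cos (a%:R * (2 * pi / k%:R)).

Lemma overlap_chord (k i j s t w : nat) :
  phi R k ^+ w * (phi R k ^+ j - 1) * (phi R k ^+ s - 1)
    = (phi R k ^+ i - 1) * (phi R k ^+ t - 1) ->
  chord k j * chord k s = chord k i * chord k t.
Proof.
have -> : phi R k = cis (2 * pi / k%:R) by [].
move=> /(congr1 sqnorm).
by rewrite !sqnormM !cis_expn sqnorm_cis !sqnorm_cis_sub1 mul1r.
Qed.

Lemma chord_angle_in (k a : nat) :
  (0 < k)%N -> (a.*2 <= k)%N -> a%:R * (2 * pi / k%:R) \in `[0, (pi : R)].
Proof.
move=> k_gt0 ak; have kR_gt0 : (0 : R) < k%:R by rewrite ltr0n.
have pi_ge0 : (0 : R) <= pi by exact/ltW/pi_gt0.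
rewrite in_itv /=; apply/andP; split; first by rewrite mulr_ge0 // divr_ge0 ?mulr_ge0 // ltW.
have -> : a%:R * (2 * pi / k%:R) = pi * ((a.*2)%:R / k%:R) :> R.
  by rewrite -muln2 natrM; field; rewrite gt_eqF.
by rewrite ler_piMr // ler_pdivrMr // mul1r ler_nat.
Qed.

(* chord k is strictly increasing on {0, ..., k/2}, as cos is on [0, pi]. *)
Lemma chord_ltE (k a b : nat) : (0 < k)%N -> (a.*2 <= k)%N -> (b.*2 <= k)%N ->
  (chord k a < chord k b) = (a < b)%N.
Proof.
move=> k_gt0 ak bk; have step_gt0 : (0 : R) < 2 * pi / k%:R.
  by rewrite divr_gt0 ?mulr_gt0 ?pi_gt0 ?ltr0n.
by rewrite ltrD2l ltrN2 ltr_pM2l // ltr_cos ?chord_angle_in // ltr_pM2r ?ltr_nat.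
Qed.

Lemma chord_gt0 (k a : nat) : (0 < k)%N -> (0 < a)%N -> (a.*2 <= k)%N ->
  0 < chord k a.
Proof.
move=> k_gt0 a_gt0 ak; have <- : chord k 0 = 0.
  by rewrite /chord mul0r cos0 mulr1 subrr.
by rewrite chord_ltE.
Qed.

End UnitCircle.

Lemma lt_cross (R : realFieldType) (x y z w : R) :
  0 < x -> 0 < y -> 0 < z -> 0 < w -> x * w = y * z -> (x < y) <-> (z < w).
Proof.
move=> x_gt0 y_gt0 z_gt0 w_gt0 e.
by split=> lt; rewrite ltNge; apply/negP => le; nra.
Qed.

Lemma double_le_even (k a : nat) : ~~ odd k -> (a <= k./2)%N -> (a.*2 <= k)%N.
Proof. by move=> ev ak; rewrite -[k in (_ <= k)%N]odd_double_half (negbTE ev) leq_double. Qed.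

Theorem lemma22 (R : realType) (k i j s t : nat) :
  (4 <= k)%N -> ~~ odd k ->
  (1 <= i <= k./2)%N -> (1 <= j <= k./2)%N ->
  (1 <= s <= k./2)%N -> (1 <= t <= k./2)%N ->
  nontrivial_overlap R k i j s t ->
  ((i < j)%N <-> (s < t)%N) /\ ((i < s)%N <-> (j < t)%N).
Proof.
move=> k_ge4 ev /andP[i1 ik] /andP[j1 jk] /andP[s1 sk] /andP[t1 tk].
move=> [[_ [w [_ /overlap_chord e]]] _].
have k_gt0 : (0 < k)%N by apply: leq_trans k_ge4.
have pos a : (1 <= a)%N -> (a <= k./2)%N -> 0 < chord R k a.
  by move=> a1 ak; apply: chord_gt0 => //; apply: double_le_even.
have mono a b : (a <= k./2)%N -> (b <= k./2)%N ->
    (chord R k a < chord R k b) = (a < b)%N.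
  by move=> ak bk; apply: chord_ltE => //; apply: double_le_even.
split.
- rewrite -(mono i j) // -(mono s t) //.
  by apply: lt_cross; rewrite ?pos // -e mulrC.
- rewrite -(mono i s) // -(mono j t) //.
  by apply: lt_cross; rewrite ?pos // -e mulrC.
Qed.
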